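(* Let $M$ be a Riemannian manifold. Let $e_1,e_2$ be paths in $M$ from $p_1$ to $p_2$ of lengths $l_1,l_2$. Suppose the loop $\alpha=e_1*\bar e_2$ based at $p_1$ can be contracted to $p_1$ through loops $\alpha_\tau$ based at $p_1$ of length at most $l_3$. Then $e_1$ is path-homotopic to $e_2$ through curves of length at most $\min\{l_1,l_2\}+l_3$. Moreover (parametric version): let $X$ be a manifold and $\{e_1^x\}_{x\in X}$, $\{e_2^x\}_{x\in X}$ continuous families of paths from $p_1(x)$ to $p_2(x)$ of lengths $l_1(x),l_2(x)$, and suppose there is a continuous family of contractions of the loops $e_1^x*\bar e_2^x$ through loops based at $p_1(x)$ of length at most $l_3(x)$. Then there is a continuous family of path homotopies from $e_1^x$ to $e_2^x$ through curves of length at most $\min_{i=1,2}\max_{x\in X}(l_i(x)+l_3(x))$.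
   Context: $*$ denotes concatenation of paths and $\bar\beta$ denotes the path $\beta$ traversed in the opposite direction. A path homotopy fixes endpoints. *)

From HB Require Import structures.
From mathcomp Require Import all_boot all_order all_algebra.
From mathcomp Require Import all_classical all_reals all_analysis.
Set Implicit Arguments. Unset Strict Implicit. Unset Printing Implicit Defensive.
Import Order.TTheory GRing.Theory Num.Theory.
Import numFieldNormedType.Exports.
Local Open Scope classical_set_scope.
Local Open Scope ring_scope.

Definition I01 {R : realType} : set R := [set t | 0 <= t <= 1].

(* A path is a function R -> M, only its values on [0,1] matter. *)
Definition curve_length {R : realType} {M : metricType R} (g : R -> M) : \bar R :=
  ereal_sup [set e : \bar R | exists (n : nat) (s : nat -> R),
     [/\ s 0%N = 0, s n = 1, (forall i, (i < n)%N -> s i <= s i.+1) &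
         e = (\sum_(i < n) mdist (g (s i)) (g (s i.+1)))%:E]].

Definition pconcat {R : realType} {M : Type} (f g : R -> M) : R -> M :=
  fun t => if t <= 2^-1 then f (2 * t) else g (2 * t - 1).

Definition path_reverse {R : realType} {M : Type} (g : R -> M) : R -> M :=
  fun t => g (1 - t).

Definition path_from_to {R : realType} {M : metricType R} (g : R -> M) (p q : M) :=
  {within I01, continuous g} /\ g 0 = p /\ g 1 = q.

Definition contraction_bounded {R : realType} {M : metricType R}
    (a : R -> M) (p : M) (l : R) (H : R -> R -> M) :=
  [/\ {within I01 `*` I01, continuous (fun z : R * R => H z.1 z.2)},
      (forall t, I01 t -> H 0 t = a t),
      (forall t, I01 t -> H 1 t = p),
      (forall tau, I01 tau -> H tau 0 = p /\ H tau 1 = p) &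
      (forall tau, I01 tau -> (curve_length (H tau) <= l%:E)%E)].

Definition path_homotopy_bounded {R : realType} {M : metricType R}
    (e f : R -> M) (p q : M) (L : R) (G : R -> R -> M) :=
  [/\ {within I01 `*` I01, continuous (fun z : R * R => G z.1 z.2)},
      (forall t, I01 t -> G 0 t = e t),
      (forall t, I01 t -> G 1 t = f t),
      (forall s, I01 s -> G s 0 = p /\ G s 1 = q) &
      (forall s, I01 s -> (curve_length (G s) <= L%:E)%E)].

(* Let H be the contraction of the loop alpha = e1 * rev e2, viewed as a map on
   the square of parameters (tau, t).  The path homotopy is H composed with a
   fixed piecewise affine self-map [sweep] of the square: at time s the curve is
   the image under H of a route in the square.  The route first runs along
   alpha (tau = 0) past its midpoint and back to it; then it climbs the side
   t = 0 to tau = v, crosses along tau = v, descends the side t = 1 and runs back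
   along the rev e2 half of alpha, v increasing from 0 to 1; finally its initial
   part, which stays at the base point, is trimmed off.  Each such route consists
   of a piece of one loop alpha_tau (length <= l3), constant pieces and a piece
   of e2 (length <= l2); exchanging e1 and e2 gives the bound l1 + l3.  Since
   [sweep] does not depend on the data, the construction is continuous in any
   parameter on which H depends continuously. *)

From HB Require Import structures.
From mathcomp Require Import all_boot all_order all_algebra.
From mathcomp Require Import all_classical all_reals all_analysis.
From mathcomp Require Import lra.
Import Order.TTheory GRing.Theory Num.Theory.
Import numFieldNormedType.Exports.
Local Open Scope classical_set_scope.
Local Open Scope ring_scope.

Set Implicit Arguments.
Unset Strict Implicit.
Unset Printing Implicit Defensive.

Ltac case_minmax :=
  let flat x := lazymatch x with
    | context [Num.min _ _] => fail | context [Num.max _ _] => fail | _ => idtac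
    end in
  repeat match goal with
  | |- context [Num.min ?x ?y] => flat x; flat y; case: (leP x y) => ?
  | |- context [Num.max ?x ?y] => flat x; flat y; case: (leP x y) => ?
  end.

Section length_le.
Context {R : realType} {M : metricType R}.
Implicit Types (c : R -> M) (a b B : R).

Definition length_le c a b B :=
  forall n (s : nat -> R), (forall i, (i < n)%N -> s i <= s i.+1) ->
    (forall i, (i <= n)%N -> a <= s i <= b) ->
    \sum_(i < n) mdist (c (s i)) (c (s i.+1)) <= B.

Lemma length_le_comp c (phi : R -> R) a b a' b' B :
  (forall x y, a <= x -> x <= y -> y <= b -> phi x <= phi y) ->
  (forall x, a <= x <= b -> a' <= phi x <= b') ->
  length_le c a' b' B -> length_le (c \o phi) a b B.
Proof.
move=> phi_mono phi_in cB n s s_mono s_in.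
apply: (cB n (phi \o s)) => [i lt_in|i /s_in /phi_in //] /=.
have /andP[asi _] := s_in i (ltnW lt_in); have /andP[_ sib] := s_in i.+1 lt_in.
exact: phi_mono (s_mono i lt_in) sib.
Qed.

Lemma eq_length_le c c' a b B : (forall t, a <= t <= b -> c t = c' t) ->
  length_le c' a b B -> length_le c a b B.
Proof.
move=> cc' cB n s s_mono s_in.
rewrite (eq_bigr (fun i : 'I_n => mdist (c' (s i)) (c' (s i.+1)))) ?cB// => i _.
by rewrite !cc' ?s_in// ltnW.
Qed.

Lemma length_le_cst c a b (p : M) : (forall t, a <= t <= b -> c t = p) ->
  length_le c a b 0.
Proof.
move=> cp; apply: (eq_length_le (c' := cst p)) => // n s _ _.
by rewrite big1 // => i _; rewrite mdistxx.
Qed.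

Lemma length_le_sub c a b a' b' B :
  a' <= a -> b <= b' -> length_le c a' b' B -> length_le c a b B.
Proof. by move=> a'a bb' cB n s s_mono s_in; apply: cB => // i /s_in; lra. Qed.

Lemma length_leW c a b B B' : B <= B' -> length_le c a b B -> length_le c a b B'.
Proof. by move=> BB' cB n s s_mono s_in; rewrite (le_trans (cB n s s_mono s_in)). Qed.

Lemma length_le_split c a m b B1 B2 : a <= m <= b ->
  length_le c a m B1 -> length_le c m b B2 -> length_le c a b (B1 + B2).
Proof.
case/andP=> am mb cB1 cB2 n s s_mono s_in.
pose s1 i := Num.min (s i) m; pose s2 i := Num.max (s i) m.
have le_split i : (i < n)%N -> mdist (c (s i)) (c (s i.+1)) <=
    mdist (c (s1 i)) (c (s1 i.+1)) + mdist (c (s2 i)) (c (s2 i.+1)).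
  move=> /s_mono si_le; rewrite /s1 /s2.
  case: (leP (s i) m) => sim; case: (leP (s i.+1) m) => sim'.
  - by rewrite mdistxx addr0.
  - exact: metric_triangle.
  - by move: (lt_le_trans sim si_le); rewrite ltNge sim'.
  - by rewrite mdistxx add0r.
apply: le_trans (lerD (cB1 n s1 _ _) (cB2 n s2 _ _)).
- by rewrite -big_split ler_sum // => i _; exact: le_split.
- by move=> i /s_mono; rewrite /s1; case_minmax; lra.
- by move=> i /s_in; rewrite /s1; case_minmax; lra.
- by move=> i /s_mono; rewrite /s2; case_minmax; lra.
- by move=> i /s_in; rewrite /s2; case_minmax; lra.
Qed.

Lemma length_le_rev c a b B :
  length_le c a b B -> length_le (fun t => c (a + b - t)) a b B.
Proof.
move=> cB n s s_mono s_in; pose s' i := a + b - s (n - i)%N.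
have -> : \sum_(i < n) mdist (c (a + b - s i)) (c (a + b - s i.+1)) =
          \sum_(i < n) mdist (c (s' i)) (c (s' i.+1)).
  rewrite (reindex_inj rev_ord_inj); apply: eq_bigr => i _.
  by rewrite metric_sym /s' /= subnSK.
apply: cB => [i lt_in|i le_in]; rewrite /s'.
  by rewrite -(subnSK lt_in) lerD2l lerN2 s_mono // -subSn // subSS leq_subr.
have /andP[? ?] := s_in _ (leq_subr i n); apply/andP; split; lra.
Qed.

Lemma curve_length_leP c B :
  (curve_length c <= B%:E)%E <-> length_le c 0 1 B.
Proof.
split=> [cB n s s_mono s_in|cB].
  (* pad the chain with the endpoints [0] and [1] *)
  pose s' i := if i == 0%N then 0 else if (i <= n.+1)%N then s i.-1 else 1.
  have s'E : \sum_(i < n.+2) mdist (c (s' i)) (c (s' i.+1)) =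
      mdist (c 0) (c (s 0%N)) + \sum_(i < n) mdist (c (s i)) (c (s i.+1))
      + mdist (c (s n)) (c 1).
    rewrite big_ord_recl big_ord_recr /= addrA /s' /= ltnn leqnn.
    rewrite !add0n; congr (_ + _ + _); apply: eq_bigr => i _.
    by rewrite /bump /= add1n !ltnS ltn_ord ltnW.
  have : ((\sum_(i < n.+2) mdist (c (s' i)) (c (s' i.+1)))%:E <= B%:E)%E.
    apply: le_trans cB; apply: ereal_sup_ubound; exists n.+2, s'.
    split => //; first by rewrite /s' /= ltnn.
    case=> [|i]; rewrite ltnS /s' /= => le_in; first by case/andP: (s_in 0%N isT).
    rewrite le_in ltnS; case: ltnP => [|ge_in]; first exact: s_mono.
    have /eqP-> : i == n by rewrite eqn_leq -ltnS le_in.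
    by case/andP: (s_in n (leqnn n)).
  rewrite lee_fin s'E.
  by have := mdist_ge0 (c 0) (c (s 0%N)); have := mdist_ge0 (c (s n)) (c 1); lra.
apply: ub_ereal_sup => _ [n [s [s0 sn s_mono ->]]]; rewrite lee_fin.
have s_homo : {in [pred i | (i <= n)%N] &, {homo s : i j / (i <= j)%N >-> i <= j}}.
  apply: homo_leq_in => [x|y x z|i j _ /[!inE] jn k|i _].
  - exact: lexx.
  - exact: le_trans.
  - by case/andP=> _ /ltnW /leq_trans; apply.
  - exact: s_mono.
apply: cB => // i le_in; rewrite -s0 -sn !s_homo ?inE //.
Qed.
End length_le.

Lemma continuous_at_pair (T U V : topologicalType) (f : T -> U) (g : T -> V) x :
  {for x, continuous f} -> {for x, continuous g} ->
  {for x, continuous (fun z => (f z, g z))}.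
Proof. by move=> ? ?; apply: cvg_pair. Qed.

Ltac continuity := repeat match goal with
  | |- continuous _ => let z := fresh "z" in move=> z
  | |- {for _, continuous _} => rewrite /prop_for
  | |- continuous_at ?x (fun z => (@?f z, @?g z)) => apply: (@continuous_at_pair _ _ _ f g x)
  | |- continuous_at ?x (fun z => Num.min (@?f z) (@?g z)) => apply: (@continuous_min _ _ f g x)
  | |- continuous_at ?x (fun z => Num.max (@?f z) (@?g z)) => apply: (@continuous_max _ _ f g x)
  | |- continuous_at ?x (fun z => (@?f z) + (@?g z)) => apply: (@continuousD _ _ _ f g x)
  | |- continuous_at ?x (fun z => (@?f z) - (@?g z)) => apply: (@continuousB _ _ _ f g x)
  | |- continuous_at ?x (fun z => - (@?f z)) => apply: (@continuousN _ _ _ f x)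
  | |- continuous_at ?x (fun z => (@?f z) * (@?g z)) => apply: (@continuousM _ _ f g x)
  | |- continuous_at ?x (fun z => (@?f z).1) => apply: (@continuous_comp _ _ _ f fst x); [|exact: cvg_fst]
  | |- continuous_at ?x (fun z => (@?f z).2) => apply: (@continuous_comp _ _ _ f snd x); [|exact: cvg_snd]
  | |- continuous_at _ (fun z => z) => exact: cvg_id
  | |- continuous_at _ (fun _ => _) => exact: cvg_cst
  end.

Lemma continuous_within_comp (S T U : topologicalType) (A : set S) (B : set T)
    (g : S -> T) (f : T -> U) :
  continuous g -> (forall x, A x -> B (g x)) -> {within B, continuous f} ->
  {within A, continuous (f \o g)}.
Proof.
move=> cg gAB /subspace_continuousP cf; apply/subspace_continuousP => x Ax.
apply: cvg_trans; last exact: (cf _ (gAB _ Ax)).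
move=> P; rewrite /from_subspace !nbhs_simpl /within /= => BP.
apply: (filterS (F := nbhs x)) (cg x _ BP) => w BPw Aw; exact/BPw/gAB.
Qed.

Definition square_map {R : realType} (F : R -> R -> R * R) :=
  forall s t, I01 s -> I01 t -> I01 (F s t).1 /\ I01 (F s t).2.

Section square_reparam.
Context {R : realType} {U : topologicalType}.

Lemma continuous_square_reparam (F : R -> R -> R * R) (H : R -> R -> U) :
  continuous (fun z : R * R => F z.1 z.2) -> square_map F ->
  {within I01 `*` I01, continuous (fun z : R * R => H z.1 z.2)} ->
  {within I01 `*` I01, continuous (fun z : R * R => H (F z.1 z.2).1 (F z.1 z.2).2)}.
Proof.
move=> cF FI; apply: continuous_within_comp cF _ => z [? ?].
exact: FI.
Qed.

Lemma continuous_family_reparam (X : topologicalType) (F : R -> R -> R * R)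
    (H : X -> R -> R -> U) :
  continuous (fun z : R * R => F z.1 z.2) -> square_map F ->
  {within [set: X] `*` I01 `*` I01, continuous (fun z : X * R * R => H z.1.1 z.1.2 z.2)} ->
  {within [set: X] `*` I01 `*` I01,
    continuous (fun z : X * R * R => H z.1.1 (F z.1.2 z.2).1 (F z.1.2 z.2).2)}.
Proof.
move=> cF FI cH.
pose F' (z : X * R * R) := ((z.1.1, (F z.1.2 z.2).1), (F z.1.2 z.2).2).
have cF' : continuous F'.
  move=> z; have cFz : {for z, continuous (fun z : X * R * R => F z.1.2 z.2)}.
    apply: (continuous_comp (f := fun z : X * R * R => (z.1.2, z.2))
      (g := fun w : R * R => F w.1 w.2)); last exact: cF.
    by continuity.
  by rewrite /F'; continuity; exact: cFz.
apply: continuous_within_comp cF' _ cH => -[[x s] t] [[_ Is] It].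
by have [? ?] := FI s t Is It.
Qed.
End square_reparam.

Lemma I01_rev {R : realType} {t : R} : I01 t -> I01 (1 - t).
Proof. by rewrite /I01 /=; lra. Qed.

Section sweep.
Context {R : realType}.
Implicit Types s t u v r x : R.

Definition clamp01 x := Num.min 1 (Num.max 0 x).

Lemma clamp01_id x : 0 <= x -> x <= 1 -> clamp01 x = x.
Proof. by move=> *; rewrite /clamp01; case_minmax; lra. Qed.

Lemma clamp01_le0 x : x <= 0 -> clamp01 x = 0.
Proof. by move=> *; rewrite /clamp01; case_minmax; lra. Qed.

Lemma clamp01_ge1 x : 1 <= x -> clamp01 x = 1.
Proof. by move=> *; rewrite /clamp01; case_minmax; lra. Qed.

Lemma clamp01_ge0 x : 0 <= clamp01 x.
Proof. by rewrite /clamp01; case_minmax; lra. Qed.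

Lemma clamp01_le1 x : clamp01 x <= 1.
Proof. by rewrite /clamp01; case_minmax; lra. Qed.

(* For [u = 1], as [r] runs over [[0, 2v + 3/2]] this point of the square climbs
   the side [t = 0] up to [tau = v], crosses along [tau = v], descends the side
   [t = 1] and returns along [tau = 0] from [t = 1] to [t = 1/2].  For [v = 0],
   as [r] runs over [[0, u + 1/2]] it goes along [tau = 0] up to [t = (1 + u)/2]
   and back to [t = 1/2]. *)
Definition square_route u v r : R * R :=
  (Num.min r (Num.min v (Num.max 0 (2 * v + 1 - r))),
   Num.max 0 (Num.min (r - v) (Num.min 1 (2 * v + 1 + u - r)))).

Lemma square_route_climb v r : 0 <= r -> r <= v -> square_route 1 v r = (r, 0).
Proof. by move=> *; rewrite /square_route; congr pair; case_minmax; lra. Qed.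

Lemma square_route_cross v r : 0 <= v -> v <= r -> r <= v + 1 ->
  square_route 1 v r = (v, r - v).
Proof. by move=> *; rewrite /square_route; congr pair; case_minmax; lra. Qed.

Lemma square_route_descend v r : 0 <= v -> v + 1 <= r -> r <= 2 * v + 1 ->
  square_route 1 v r = (2 * v + 1 - r, 1).
Proof. by move=> *; rewrite /square_route; congr pair; case_minmax; lra. Qed.

Lemma square_route_return v r : 0 <= v -> 2 * v + 1 <= r -> r <= 2 * v + 3/2 ->
  square_route 1 v r = (0, 2 * v + 2 - r).
Proof. by move=> *; rewrite /square_route; congr pair; case_minmax; lra. Qed.

Lemma square_route_out u r : 0 <= u -> u <= 1 -> 0 <= r -> r <= (1 + u) / 2 ->
  square_route u 0 r = (0, r).
Proof. by move=> *; rewrite /square_route; congr pair; case_minmax; lra. Qed.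

Lemma square_route_back u r : 0 <= u -> u <= 1 -> (1 + u) / 2 <= r -> r <= 2^-1 + u ->
  square_route u 0 r = (0, 1 + u - r).
Proof. by move=> *; rewrite /square_route; congr pair; case_minmax; lra. Qed.

Lemma square_route_square u v r : 0 <= v -> v <= 1 -> 0 <= r ->
  I01 (square_route u v r).1 /\ I01 (square_route u v r).2.
Proof. by move=> *; rewrite /I01 /square_route /=; split; apply/andP; case_minmax; lra. Qed.

Definition sweep_out s := clamp01 (3 * s).
Definition sweep_lift s := clamp01 (3 * s - 1).
Definition sweep_start s := 3 * clamp01 (3 * s - 2).
Definition sweep_end s := 2 * sweep_lift s + 2^-1 + sweep_out s.

Definition sweep_param s t := sweep_start s + t * (sweep_end s - sweep_start s).

Definition sweep s t : R * R :=
  square_route (sweep_out s) (sweep_lift s) (sweep_param s t).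

Lemma sweep_stage s : 0 <= s -> s <= 1 ->
  [\/ [/\ s <= 3^-1, sweep_out s = 3 * s, sweep_lift s = 0 & sweep_start s = 0],
      [/\ 3^-1 <= s <= 2/3, sweep_out s = 1, sweep_lift s = 3 * s - 1 & sweep_start s = 0] |
      [/\ 2/3 <= s, sweep_out s = 1, sweep_lift s = 1 & sweep_start s = 9 * s - 6]].
Proof.
rewrite /sweep_out /sweep_lift /sweep_start => s0 s1.
have [s13|s13] := leP s 3^-1.
  apply: Or31; rewrite (clamp01_id (x := 3 * s)) ?(clamp01_le0 (x := 3 * s - 1))
    ?(clamp01_le0 (x := 3 * s - 2)) ?mulr0; (try split); lra.
have [s23|s23] := leP s (2/3).
  apply: Or32; rewrite (clamp01_ge1 (x := 3 * s)) ?(clamp01_id (x := 3 * s - 1))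
    ?(clamp01_le0 (x := 3 * s - 2)) ?mulr0; (try split); lra.
apply: Or33; rewrite (clamp01_ge1 (x := 3 * s)) ?(clamp01_ge1 (x := 3 * s - 1))
    ?(clamp01_id (x := 3 * s - 2)); (try split); lra.
Qed.

Lemma sweep_start_end s : 0 <= s -> s <= 1 ->
  0 <= sweep_start s /\ sweep_start s <= sweep_end s.
Proof.
rewrite /sweep_end => s0 s1.
by case: (sweep_stage s0 s1) => -[? -> -> ->]; split; lra.
Qed.

Lemma sweep_param_itv s t : 0 <= s -> s <= 1 -> 0 <= t -> t <= 1 ->
  sweep_start s <= sweep_param s t <= sweep_end s.
Proof.
move=> s0 s1 t0 t1; have [_] := sweep_start_end s0 s1; rewrite /sweep_param.
by move: (sweep_start s) (sweep_end s) => a b ab; nra.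
Qed.

Lemma sweep_param_homo s t t' : 0 <= s -> s <= 1 -> t <= t' ->
  sweep_param s t <= sweep_param s t'.
Proof.
move=> s0 s1 tt'; have [_ ab] := sweep_start_end s0 s1.
by rewrite lerD2l ler_wpM2r // subr_ge0.
Qed.

Lemma sweep_square : square_map sweep.
Proof.
move=> s t /andP[s0 s1] /andP[t0 t1]; have [a0 _] := sweep_start_end s0 s1.
have /andP[r0 _] := sweep_param_itv s0 s1 t0 t1.
by apply: square_route_square; rewrite ?clamp01_ge0 ?clamp01_le1 //; lra.
Qed.

Lemma sweep_continuous : continuous (fun z : R * R => sweep z.1 z.2).
Proof.
rewrite /sweep /sweep_param /square_route /sweep_start /sweep_end /sweep_out /sweep_lift /clamp01 /=.
by continuity.
Qed.

Lemma sweep_0t t : 0 <= t -> t <= 1 -> sweep 0 t = (0, t / 2).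
Proof.
move=> t0 t1; rewrite /sweep /sweep_param /sweep_end.
case: (sweep_stage (lexx 0) ler01) => -[? -> -> ->]; [|exfalso; lra..].
by rewrite square_route_out; [congr pair| ..]; lra.
Qed.

Lemma sweep_1t t : 0 <= t -> t <= 1 -> sweep 1 t = (0, 1 - t / 2).
Proof.
move=> t0 t1; rewrite /sweep /sweep_param /sweep_end.
case: (sweep_stage ler01 (lexx 1)) => -[? -> -> ->]; [exfalso; lra..|].
by rewrite square_route_return; [congr pair| ..]; lra.
Qed.

Lemma sweep_s1 s : 0 <= s -> s <= 1 -> sweep s 1 = (0, 2^-1).
Proof.
move=> s0 s1; rewrite /sweep /sweep_param /sweep_end.
case: (sweep_stage s0 s1) => -[? -> -> ->].
- by rewrite square_route_back; [congr pair| ..]; lra.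
- by rewrite square_route_return; [congr pair| ..]; lra.
- by rewrite square_route_return; [congr pair| ..]; lra.
Qed.

Lemma sweep_s0 s : 0 <= s -> s <= 1 ->
  [\/ (sweep s 0).2 = 0, (sweep s 0).1 = 1 | (sweep s 0).2 = 1].
Proof.
move=> s0 s1; rewrite /sweep /sweep_param mul0r addr0.
case: (sweep_stage s0 s1) => -[? -> -> ->].
- by rewrite square_route_out /=; [apply: Or31| ..]; lra.
- by rewrite square_route_climb /=; [apply: Or31| ..]; lra.
have [le1|lt1] := leP (9 * s - 6) 1.
  by rewrite square_route_climb /=; [apply: Or31| ..]; lra.
have [le2|lt2] := leP (9 * s - 6) 2.
  by rewrite square_route_cross /=; [apply: Or32| ..]; lra.
by rewrite square_route_descend /=; [apply: Or33| ..]; lra.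
Qed.

Definition sweep_rev s t : R * R := ((sweep (1 - s) t).1, 1 - (sweep (1 - s) t).2).

Lemma sweep_rev_continuous : continuous (fun z : R * R => sweep_rev z.1 z.2).
Proof.
rewrite /sweep_rev /sweep /sweep_param /square_route /sweep_start /sweep_end.
by rewrite /sweep_out /sweep_lift /clamp01 /=; continuity.
Qed.

Lemma sweep_rev_square : square_map sweep_rev.
Proof.
move=> s t Is It; have [? ?] := sweep_square (I01_rev Is) It.
by split=> //; exact: I01_rev.
Qed.
End sweep.

Section contraction_homotopy.
Variables (R : realType) (M : metricType R) (p1 p2 : M) (e1 e2 : R -> M).
Variables (l2 l3 : R) (H : R -> R -> M).
Hypotheses (e1_1 : e1 1 = p2) (e2_1 : e2 1 = p2).
Hypothesis H_contr : contraction_bounded (pconcat e1 (path_reverse e2)) p1 l3 H.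

Lemma contraction_first_half y : 0 <= y -> y <= 2^-1 -> H 0 y = e1 (2 * y).
Proof.
case: H_contr => _ H0 _ _ _ y0 y1; rewrite H0 /I01 /pconcat /=; last lra.
by rewrite ifT.
Qed.

Lemma contraction_second_half y : 2^-1 <= y -> y <= 1 -> H 0 y = e2 (2 - 2 * y).
Proof.
case: H_contr => _ H0 _ _ _ y0 y1; rewrite H0 /I01 /pconcat /path_reverse /=; last lra.
case: leP => [yhalf|_]; last by congr e2; lra.
have -> : y = 2^-1 by lra.
by rewrite mulfV ?pnatr_eq0 // e1_1 -e2_1; congr e2; lra.
Qed.

Lemma contraction_side tau : 0 <= tau -> tau <= 1 -> H tau 0 = p1 /\ H tau 1 = p1.
Proof. by case: H_contr => _ _ _ Hside _ *; apply: Hside; rewrite /I01 /=; lra. Qed.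

Lemma contraction_length tau : 0 <= tau -> tau <= 1 -> length_le (H tau) 0 1 l3.
Proof.
by case: H_contr => _ _ _ _ Hlen *; apply/curve_length_leP/Hlen; rewrite /I01 /=; lra.
Qed.

Hypothesis e2_len : (curve_length e2 <= l2%:E)%E.

Let e2_length_le : length_le e2 0 1 l2. Proof. exact/curve_length_leP. Qed.

Lemma length_le_route_lift v : 0 <= v -> v <= 1 ->
  length_le (fun r => H (square_route 1 v r).1 (square_route 1 v r).2)
    0 (2 * v + 3/2) (l3 + l2).
Proof.
move=> v0 v1; apply: (length_leW (B := 0 + (l3 + (0 + l2)))); first lra.
apply: (length_le_split (m := v)); [lra| |].
  apply: (length_le_cst (p := p1)) => r /andP[r0 rv].
  by rewrite square_route_climb //; case: (contraction_side r0 (le_trans rv v1)).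
apply: (length_le_split (m := v + 1)); [lra| |].
  apply: (eq_length_le (c' := H v \o (fun r => r - v))) => [r ?|].
    by rewrite square_route_cross //; lra.
  apply: length_le_comp (contraction_length v0 v1) => [x y|x]; lra.
apply: (length_le_split (m := 2 * v + 1)); [lra| |].
  apply: (length_le_cst (p := p1)) => r /andP[r_ge r_le].
  rewrite square_route_descend //.
  have [tau0 tau1] : 0 <= 2 * v + 1 - r /\ 2 * v + 1 - r <= 1 by lra.
  by case: (contraction_side tau0 tau1).
apply: (eq_length_le (c' := e2 \o (fun r => 2 * r - 4 * v - 2))) => [r /andP[? ?]|].
  by rewrite square_route_return //= contraction_second_half; [congr e2|..]; lra.
apply: length_le_comp e2_length_le => [x y|x]; lra.
Qed.

Lemma length_le_route_out u : 0 <= u -> u <= 1 ->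
  length_le (fun r => H (square_route u 0 r).1 (square_route u 0 r).2)
    0 (2^-1 + u) (l3 + l2).
Proof.
move=> u0 u1; apply: (length_le_split (m := (1 + u) / 2)); [lra| |].
  apply: (eq_length_le (c' := H 0)) => [r /andP[? ?]|].
    by rewrite square_route_out.
  by apply: length_le_sub (contraction_length _ _); lra.
apply: (eq_length_le (c' := e2 \o (fun r => 2 * r - 2 * u))) => [r /andP[? ?]|].
  by rewrite square_route_back //= contraction_second_half; [congr e2|..]; lra.
apply: length_le_comp e2_length_le => [x y|x]; lra.
Qed.

Lemma length_le_sweep s : 0 <= s -> s <= 1 ->
  length_le (fun t => H (sweep s t).1 (sweep s t).2) 0 1 (l3 + l2).
Proof.
move=> s0 s1; have [a0 _] := sweep_start_end s0 s1.
pose route r := H (square_route (sweep_out s) (sweep_lift s) r).1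
                  (square_route (sweep_out s) (sweep_lift s) r).2.
apply: (length_le_comp (c := route) (phi := sweep_param s) (a' := 0) (b' := sweep_end s)).
- by move=> x y _ xy _; exact: sweep_param_homo.
- by move=> x /andP[x0 x1]; have := sweep_param_itv s0 s1 x0 x1; lra.
rewrite /route /sweep_end; case: (sweep_stage s0 s1) => -[? -> -> _].
- by rewrite mulr0 add0r; apply: length_le_route_out; lra.
- by rewrite -addrA (_ : 2^-1 + 1 = 3/2); [apply: length_le_route_lift|]; lra.
- by rewrite -addrA (_ : 2^-1 + 1 = 3/2); [apply: length_le_route_lift|]; lra.
Qed.

Lemma contraction_sweep_homotopy :
  path_homotopy_bounded e1 e2 p1 p2 (l2 + l3) (fun s t => H (sweep s t).1 (sweep s t).2).
Proof.
have [cH _ H1 _ _] := H_contr.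
split=> [|t /andP[t0 t1]|t /andP[t0 t1]|s /andP[s0 s1]|s /andP[s0 s1]].
- exact: continuous_square_reparam sweep_continuous sweep_square cH.
- by rewrite sweep_0t //= contraction_first_half; [congr e1|..]; lra.
- by rewrite sweep_1t //= contraction_second_half; [congr e2|..]; lra.
- split; last first.
    rewrite sweep_s1 //= contraction_first_half; [|lra..].
    by rewrite divff ?e1_1 // pnatr_eq0.
  have [/andP[x0 x1] y01] : I01 (sweep s 0).1 /\ I01 (sweep s 0).2.
    by apply: sweep_square; rewrite /I01 /= ?s0 ?s1 ?lexx ?ler01.
  have [side0 side1] := contraction_side x0 x1.
  by case: (sweep_s0 s0 s1) => [->|->|->] //; exact: H1.
- by apply/curve_length_leP; rewrite addrC; exact: length_le_sweep.
Qed.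
End contraction_homotopy.

Section reversal.
Context {R : realType} {M : metricType R}.

Lemma path_reverse_pconcat (e1 e2 : R -> M) t : e1 1 = e2 1 -> I01 t ->
  path_reverse (pconcat e1 (path_reverse e2)) t = pconcat e2 (path_reverse e1) t.
Proof.
rewrite /I01 /path_reverse /pconcat /= => e12 /andP[t0 t1].
case: (leP (1 - t) 2^-1) => ht'; case: (leP t 2^-1) => ht.
- have -> : t = 2^-1 by lra.
  have -> : 2 * (1 - 2^-1) = 1 :> R by lra.
  by have -> : 2 * 2^-1 = 1 :> R by lra.
- by congr e1; lra.
- by congr e2; lra.
- by clear e12; exfalso; lra.
Qed.

Lemma eq_contraction_bounded (a b : R -> M) p l H : (forall t, I01 t -> a t = b t) ->
  contraction_bounded a p l H -> contraction_bounded b p l H.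
Proof. by move=> ab [cH H0 *]; split=> // t It; rewrite -ab ?H0. Qed.

Lemma contraction_bounded_reverse (a : R -> M) p l H :
  contraction_bounded a p l H ->
  contraction_bounded (path_reverse a) p l (fun tau t => H tau (1 - t)).
Proof.
case=> cH H0 H1 Hside Hlen; split=> [|t It|t It|tau Itau|tau Itau].
- apply: (continuous_square_reparam (F := fun tau t => (tau, 1 - t))) cH.
    by continuity.
  by move=> s t Is It; split=> //; exact: I01_rev.
- by rewrite H0 //; exact: I01_rev.
- by rewrite H1 //; exact: I01_rev.
- by rewrite subr0 subrr; case: (Hside tau Itau).
- apply/curve_length_leP/(eq_length_le (c' := fun t => H tau (0 + 1 - t))).
    by move=> t _; rewrite add0r.
  exact/length_le_rev/curve_length_leP/Hlen.
Qed.

Lemma path_homotopy_bounded_sym (e f : R -> M) p q L G :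
  path_homotopy_bounded e f p q L G ->
  path_homotopy_bounded f e p q L (fun s => G (1 - s)).
Proof.
case=> cG G0 G1 Gend Glen; split=> [|t It|t It|s Is|s Is].
- apply: (continuous_square_reparam (F := fun s t => (1 - s, t))) cG.
    by continuity.
  by move=> s t Is It; split=> //; exact: I01_rev.
- by rewrite subr0 G1.
- by rewrite subrr G0.
- exact/Gend/I01_rev.
- exact/Glen/I01_rev.
Qed.

Lemma path_homotopy_boundedW (e f : R -> M) p q L L' G : L <= L' ->
  path_homotopy_bounded e f p q L G -> path_homotopy_bounded e f p q L' G.
Proof.
move=> LL' [cG G0 G1 Gend Glen]; split=> // s Is.
by rewrite (le_trans (Glen s Is)) ?lee_fin.
Qed.

Lemma contraction_sweep_rev_homotopy (p1 p2 : M) (e1 e2 : R -> M) (l1 l3 : R)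
    (H : R -> R -> M) :
  e1 1 = p2 -> e2 1 = p2 -> (curve_length e1 <= l1%:E)%E ->
  contraction_bounded (pconcat e1 (path_reverse e2)) p1 l3 H ->
  path_homotopy_bounded e1 e2 p1 p2 (l1 + l3)
    (fun s t => H (sweep_rev s t).1 (sweep_rev s t).2).
Proof.
move=> e1_1 e2_1 e1_len Hc.
have Hc' : contraction_bounded (pconcat e2 (path_reverse e1)) p1 l3
    (fun tau t => H tau (1 - t)).
  move: (contraction_bounded_reverse Hc); apply: eq_contraction_bounded => t It.
  by apply: path_reverse_pconcat; rewrite ?e1_1.
exact: path_homotopy_bounded_sym (contraction_sweep_homotopy e2_1 e1_1 Hc' e1_len).
Qed.
End reversal.

Theorem lemma4p3 (R : realType) (M : metricType R) :
  (* non-parametric version *)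
  (forall (p1 p2 : M) (e1 e2 : R -> M) (l1 l2 l3 : R) (H : R -> R -> M),
     path_from_to e1 p1 p2 -> path_from_to e2 p1 p2 ->
     curve_length e1 = l1%:E -> curve_length e2 = l2%:E ->
     contraction_bounded (pconcat e1 (path_reverse e2)) p1 l3 H ->
     exists G : R -> R -> M,
       path_homotopy_bounded e1 e2 p1 p2 (Num.min l1 l2 + l3) G)
  /\
  (* parametric version *)
  (forall (X : topologicalType) (p1 p2 : X -> M) (e1 e2 : X -> R -> M)
          (l1 l2 l3 : X -> R) (H : X -> R -> R -> M) (L1 L2 : R),
     {within [set: X] `*` I01, continuous (fun z : X * R => e1 z.1 z.2)} ->
     {within [set: X] `*` I01, continuous (fun z : X * R => e2 z.1 z.2)} ->
     (forall x, path_from_to (e1 x) (p1 x) (p2 x)) ->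
     (forall x, path_from_to (e2 x) (p1 x) (p2 x)) ->
     (forall x, curve_length (e1 x) = (l1 x)%:E) ->
     (forall x, curve_length (e2 x) = (l2 x)%:E) ->
     {within [set: X] `*` I01 `*` I01,
        continuous (fun z : X * R * R => H z.1.1 z.1.2 z.2)} ->
     (forall x, contraction_bounded (pconcat (e1 x) (path_reverse (e2 x))) (p1 x) (l3 x) (H x)) ->
     (forall x, l1 x + l3 x <= L1) ->
     (forall x, l2 x + l3 x <= L2) ->
     exists G : X -> R -> R -> M,
       {within [set: X] `*` I01 `*` I01,
          continuous (fun z : X * R * R => G z.1.1 z.1.2 z.2)} /\
       forall x, path_homotopy_bounded (e1 x) (e2 x) (p1 x) (p2 x) (Num.min L1 L2) (G x)).
Proof.
split=> [p1 p2 e1 e2 l1 l2 l3 H [_ [_ e1_1]] [_ [_ e2_1]] e1_len e2_len Hc|].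
  have [_|_] := leP l1 l2.
  - exists (fun s t => H (sweep_rev s t).1 (sweep_rev s t).2).
    by apply: (contraction_sweep_rev_homotopy e1_1 e2_1 _ Hc); rewrite e1_len.
  - exists (fun s t => H (sweep s t).1 (sweep s t).2).
    by apply: (contraction_sweep_homotopy e1_1 e2_1 Hc); rewrite e2_len.
move=> X p1 p2 e1 e2 l1 l2 l3 H L1 L2 _ _ e1_path e2_path e1_len e2_len cH Hc L1_ge L2_ge.
have ends x : e1 x 1 = p2 x /\ e2 x 1 = p2 x.
  by case: (e1_path x) => _ [_ ->]; case: (e2_path x) => _ [_ ->].
have [_|_] := leP L1 L2.
- exists (fun x s t => H x (sweep_rev s t).1 (sweep_rev s t).2); split.
    exact: continuous_family_reparam sweep_rev_continuous sweep_rev_square cH.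
  move=> x; have [e1_1 e2_1] := ends x; apply: path_homotopy_boundedW (L1_ge x) _.
  by apply: (contraction_sweep_rev_homotopy e1_1 e2_1 _ (Hc x)); rewrite e1_len.
- exists (fun x s t => H x (sweep s t).1 (sweep s t).2); split.
    exact: continuous_family_reparam sweep_continuous sweep_square cH.
  move=> x; have [e1_1 e2_1] := ends x; apply: path_homotopy_boundedW (L2_ge x) _.
  by apply: (contraction_sweep_homotopy e1_1 e2_1 (Hc x)); rewrite e2_len.
Qed.
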